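(* For every real $\beta\ge 1$ and every integer $n>0$, $\sum_{i=0}^{n}\Big(2^{i}\beta^{2^i}\prod_{j=i}^{n}(1-2^j)\Big)<0.$ *)

From mathcomp Require Import all_boot all_order all_algebra.

From mathcomp Require Import all_boot all_order all_algebra.
From mathcomp Require Import ring zify.
Import Order.TTheory GRing.Theory Num.Theory.
Local Open Scope ring_scope.

(** With [c m i = 2^i * prod_(i < j <= m) (1 - 2^j)] and
    [g_m(x) = sum_(i <= m) c m i * x^(2^i - 1)], the sum for [n = m + 1] equals
    [2 (1 - 2^n) beta^2 g_m(beta^2)], so it suffices that [g_m(y) >= 1] for
    [y >= 1].  In fact all Taylor coefficients of [g_m] at [1] are
    nonnegative, by induction on [m]: the constant one is [g_m(1) = 1] (a
    telescoping sum), and [g_(m+1)'] is a positive multiple of [g_m(X^2)].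
    Nonnegativity of the Taylor coefficients at [1] survives the substitution
    [X -> X^2], as [(X + 1)^2 = (X^2 + 2X) + 1], and passes from [p'] to [p]
    when [p(1) >= 0]. *)

Section NonnegTaylorAtOne.

Variable R : realFieldType.
Implicit Types (p : {poly R}) (x : R).

Definition taylor1 p := p \Po ('X + 1).

Lemma horner_taylor1 p x : (taylor1 p).[x] = p.[x + 1].
Proof. by rewrite horner_comp hornerD hornerX hornerC. Qed.

Lemma coef0_taylor1 p : (taylor1 p)`_0 = p.[1].
Proof. by rewrite -horner_coef0 horner_taylor1 add0r. Qed.

Lemma deriv_taylor1 p : (taylor1 p)^`() = taylor1 p^`().
Proof. by rewrite deriv_comp derivD derivX derivC addr0 mulr1. Qed.

Lemma taylor1_comp_sqr p : taylor1 (p \Po 'X^2) = taylor1 p \Po ('X^2 + 'X *+ 2).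
Proof.
rewrite /taylor1 -!comp_polyA comp_Xn_poly comp_polyD comp_polyX comp_polyC.
by congr (p \Po _); ring.
Qed.

Lemma nneg_poly_coef0_le_horner p x :
  p \is a polyOver Num.nneg -> 0 <= x -> p`_0 <= p.[x].
Proof.
move=> /polyOverP p_ge0 x_ge0.
rewrite (@horner_coef_wide _ (size p).+1) // big_ord_recl /= expr0 mulr1 lerDl.
by apply: sumr_ge0 => i _; rewrite mulr_ge0 ?exprn_ge0 -?nnegrE.
Qed.

Lemma taylor1_nneg_horner_ge p x :
  taylor1 p \is a polyOver Num.nneg -> 1 <= x -> p.[1] <= p.[x].
Proof.
move=> tp_ge0 x_ge1; rewrite -coef0_taylor1 -(subrK 1 x) -horner_taylor1.
by apply: nneg_poly_coef0_le_horner; rewrite ?subr_ge0.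
Qed.

Lemma taylor1_nneg_comp_sqr p :
  taylor1 p \is a polyOver Num.nneg -> taylor1 (p \Po 'X^2) \is a polyOver Num.nneg.
Proof.
move=> tp_ge0; rewrite taylor1_comp_sqr.
(* Stated with [nneg_num_pred] rather than [Num.nneg]: the closure instances
   behind [rpredD] are keyed on it. *)
have shift_ge0 : 'X^2 + 'X *+ 2 \is a polyOver (@Num.Def.nneg_num_pred R).
  by rewrite rpredD ?rpredMn ?polyOverXn ?polyOverX.
exact: polyOver_comp.
Qed.

Lemma taylor1_nneg_from_deriv p :
  0 <= p.[1] -> taylor1 p^`() \is a polyOver Num.nneg ->
  taylor1 p \is a polyOver Num.nneg.
Proof.
move=> p1_ge0 /polyOverP tdp_ge0; apply/polyOverP => -[|k].
  by rewrite coef0_taylor1.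
by have := tdp_ge0 k; rewrite -deriv_taylor1 coef_deriv nnegrE pmulrn_lge0.
Qed.

Definition pow2_prod m i : R := \prod_(i <= j < m.+1) (1 - 2 ^+ j).

Definition pow2_coef m i : R := 2 ^+ i * pow2_prod m i.+1.

Definition pow2_poly m : {poly R} :=
  \sum_(0 <= i < m.+1) pow2_coef m i *: 'X^(2 ^ i - 1).

Lemma pow2_prod_recl m i : (i <= m)%N -> pow2_prod m i = (1 - 2 ^+ i) * pow2_prod m i.+1.
Proof. by move=> le_im; rewrite /pow2_prod big_ltn. Qed.

Lemma pow2_prod_recr m i : (i <= m.+1)%N -> pow2_prod m.+1 i = pow2_prod m i * (1 - 2 ^+ m.+1).
Proof. by move=> le_im; rewrite /pow2_prod big_nat_recr. Qed.

Lemma pow2_coef_shift m k :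
  (k <= m)%N -> (1 - 2 ^+ k.+1) * pow2_coef m.+1 k.+1 = 2 * (1 - 2 ^+ m.+1) * pow2_coef m k.
Proof.
move=> le_km; rewrite /pow2_coef mulrCA -pow2_prod_recl // pow2_prod_recr //.
by rewrite exprS; ring.
Qed.

Lemma horner_pow2_poly m x :
  (pow2_poly m).[x] = \sum_(0 <= i < m.+1) pow2_coef m i * x ^+ (2 ^ i - 1).
Proof. by rewrite horner_sum; apply: eq_bigr => i _; rewrite hornerZ hornerXn. Qed.

(* The coefficients telescope: [pow2_coef m i = pow2_prod m i.+1 - pow2_prod m i],
   and [pow2_prod m 0 = 0] because of its factor [1 - 2^0]. *)
Lemma pow2_poly_at1 m : (pow2_poly m).[1] = 1.
Proof.
rewrite horner_pow2_poly.
under eq_big_nat => i /andP[_ le_im].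
  rewrite expr1n mulr1 /pow2_coef.
  have -> : 2 ^+ i * pow2_prod m i.+1 = pow2_prod m i.+1 - pow2_prod m i.
    by rewrite [pow2_prod m i]pow2_prod_recl //; ring.
  over.
rewrite telescope_sumr // [pow2_prod m 0]pow2_prod_recl // expr0 subrr mul0r subr0.
by rewrite /pow2_prod big_geq.
Qed.

Lemma deriv_pow2_polyS m :
  (pow2_poly m.+1)^`() = (2 * (2 ^+ m.+1 - 1)) *: (pow2_poly m \Po 'X^2).
Proof.
rewrite /pow2_poly raddf_sum big_nat_recl //= derivZ expn0 subnn derivXn mulr0n.
rewrite scaler0 add0r rmorph_sum scaler_sumr; apply: eq_big_nat => k /andP[_ le_km].
rewrite /= derivZ derivXn comp_polyZ comp_Xn_poly -exprM scalerA -scaler_nat scalerA.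
have -> : ((2 ^ k.+1 - 1).-1 = 2 * (2 ^ k - 1))%N.
  by have := expn_gt0 2 k; rewrite expnS; lia.
congr (_ *: _); rewrite natrB ?expn_gt0 // natrX.
by rewrite -[LHS]opprK -mulrN opprB mulrC pow2_coef_shift //; ring.
Qed.

Lemma taylor1_pow2_poly_nneg m : taylor1 (pow2_poly m) \is a polyOver Num.nneg.
Proof.
elim: m => [|m IHm].
  rewrite /taylor1 /pow2_poly big_nat1 /pow2_coef /pow2_prod big_geq // expr0 mulr1.
  by rewrite subnn expr0 alg_polyC comp_polyC polyOverC nnegrE.
apply: taylor1_nneg_from_deriv; first by rewrite pow2_poly_at1.
rewrite deriv_pow2_polyS /taylor1 comp_polyZ polyOverZ ?taylor1_nneg_comp_sqr //.
by rewrite nnegrE mulr_ge0 // subr_ge0 exprn_ege1 // ler1n.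
Qed.

Lemma pow2_poly_ge1 m x : 1 <= x -> 1 <= (pow2_poly m).[x].
Proof.
by move=> x_ge1; rewrite -(pow2_poly_at1 m) taylor1_nneg_horner_ge ?taylor1_pow2_poly_nneg.
Qed.

Lemma sum_pow2_prod_eq m (beta : R) :
  \sum_(0 <= i < m.+2) (2 ^+ i * beta ^+ (2 ^ i) * pow2_prod m.+1 i)
  = 2 * (1 - 2 ^+ m.+1) * beta ^+ 2 * (pow2_poly m).[beta ^+ 2].
Proof.
rewrite big_nat_recl // /pow2_prod big_ltn //= expr0 subrr mul0r mulr0 add0r.
rewrite horner_pow2_poly !mulr_sumr; apply: eq_big_nat => k /andP[_ le_km].
have -> : beta ^+ (2 ^ k.+1) = beta ^+ 2 * (beta ^+ 2) ^+ (2 ^ k - 1).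
  by rewrite -exprM -exprD; congr (_ ^+ _); have := expn_gt0 2 k; rewrite expnS; lia.
rewrite -/(pow2_prod m.+1 k.+1) pow2_prod_recl //.
transitivity (beta ^+ 2 * (beta ^+ 2) ^+ (2 ^ k - 1) * ((1 - 2 ^+ k.+1) * pow2_coef m.+1 k.+1)).
  by rewrite /pow2_coef; ring.
by rewrite pow2_coef_shift //; ring.
Qed.

End NonnegTaylorAtOne.

Theorem lemma4 (R : realFieldType) (beta : R) (n : nat) :
  1 <= beta -> (0 < n)%N ->
  \sum_(0 <= i < n.+1)
     ((2 ^+ i : R) * beta ^+ (2 ^ i)%N * \prod_(i <= j < n.+1) (1 - (2 ^+ j : R))) < 0.
Proof.
move=> beta_ge1; case: n => [//|m] _.
rewrite sum_pow2_prod_eq -mulrA nmulr_rlt0; last first.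
  by rewrite pmulr_rlt0 ?ltr0n // subr_lt0 exprn_egt1 ?ltr1n.
have beta2_ge1 : 1 <= beta ^+ 2 by rewrite exprn_ege1.
by rewrite mulr_gt0 ?(lt_le_trans ltr01) ?pow2_poly_ge1.
Qed.
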